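(* Let $d\geq 2$ be even, and let $Q$ be a real hyperbolic polynomial of degree $d$ with positive leading coefficient and nonzero constant term which defines the moduli order admitting equalities $r_{PN}^0$ or $r_{NP}^0$. Then exactly one of the following holds: (i) $Q$ is even, i.e. $Q=A\prod_{j=1}^{d/2}(x^2-a_j^2)$ with $A>0$ and $a_j\in\mathbb{R}\setminus\{0\}$ not necessarily distinct. In this case the coefficients of $Q$ have signs $(+,0,-,0,+,0,-,0,\dots)$, read from the leading coefficient down to the constant term. (ii) All coefficients of $Q$ are nonzero, and the multiset of roots of $Q$ cannot be partitioned into $d/2$ pairs of the form $\{a_j,-a_j\}$. In this case $Q$ defines the sign pattern $\Sigma_+$ if it defines $r_{PN}^0$, and the sign pattern $\Sigma_-$ if it defines $r_{NP}^0$.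
   Context: A hyperbolic polynomial (HP) is a real univariate polynomial all of whose roots are real. A moduli order admitting equalities (MOAE) of length $d$ is a string of $d$ letters $P$/$N$ separated by $\leq$. A HP $Q$ of degree $d$ with nonzero constant term defines such a string if its $d$ roots, counted with multiplicity, can be listed as $z_1,\dots,z_d$ with $|z_1|\leq\dots\leq|z_d|$, where $z_i>0$ when the $i$-th letter is $P$ and $z_i<0$ when it is $N$. $r_{PN}^0$ is the alternating string $P\leq N\leq P\leq\dots\leq N$ (even length). $r_{NP}^0$ is $N\leq P\leq N\leq\dots\leq P$ (even length). The sign pattern of a polynomial $a_dx^d+\dots+a_0$ with all $a_j\neq0$ is $(\mathrm{sgn}(a_d),\dots,\mathrm{sgn}(a_0))$. $\Sigma_+=(+,+,-,-,+,+,\dots)$ has entry $+$ in position $k$ ($k=0,\dots,d$, the sign of the coefficient of $x^{d-k}$) iff $k\equiv0,1\pmod4$. $\Sigma_-=(+,-,-,+,+,-,-,+,\dots)$ has entry $+$ in position $k$ iff $k\equiv0,3\pmod4$. *)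

From HB Require Import structures.
From mathcomp Require Import all_boot all_order all_algebra.
Set Implicit Arguments. Unset Strict Implicit. Unset Printing Implicit Defensive.
Import Order.TTheory GRing.Theory Num.Theory.
Local Open Scope ring_scope.

Definition hyperbolic (R : realFieldType) (Q : {poly R}) : Prop :=
  exists s : seq R, Q = lead_coef Q *: \prod_(z <- s) ('X - z%:P).

(* A moduli order admitting equalities is encoded as a word w : seq bool,
   true = letter P, false = letter N. *)
Definition defines_moae (R : realFieldType) (Q : {poly R}) (w : seq bool) : Prop :=
  exists s : seq R,
    [/\ size s = size w,
        Q = lead_coef Q *: \prod_(z <- s) ('X - z%:P),
        sorted (fun x y : R => `|x| <= `|y|) s &
        forall i, (i < size w)%N ->
          (nth true w i -> 0 < s`_i) /\ (~~ nth true w i -> s`_i < 0)].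

Definition r_PN0 (d : nat) : seq bool := mkseq (fun i => ~~ odd i) d.
Definition r_NP0 (d : nat) : seq bool := mkseq (fun i => odd i) d.

(* Q (of degree d) defines the sign pattern sigma (position k = sign of the
   coefficient of x^(d-k), true = +, false = -); all coefficients nonzero. *)
Definition defines_sign_pattern (R : realFieldType) (Q : {poly R}) (d : nat)
    (sigma : nat -> bool) : Prop :=
  forall k, (k <= d)%N ->
    (sigma k -> 0 < Q`_(d - k)) /\ (~~ sigma k -> Q`_(d - k) < 0).

Definition Sigma_plus (k : nat) : bool := (k %% 4 == 0)%N || (k %% 4 == 1)%N.
Definition Sigma_minus (k : nat) : bool := (k %% 4 == 0)%N || (k %% 4 == 3)%N.

Definition even_poly_prop (R : realFieldType) (Q : {poly R}) : Prop :=
  forall i, odd i -> Q`_i = 0.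

Definition roots_pairable (R : realFieldType) (Q : {poly R}) : Prop :=
  exists s a : seq R,
    Q = lead_coef Q *: \prod_(z <- s) ('X - z%:P) /\
    perm_eq s (a ++ map (fun x => - x) a).

From HB Require Import structures.
From mathcomp Require Import all_boot all_order all_algebra.
From mathcomp Require Import zify ring lra.
Set Implicit Arguments. Unset Strict Implicit. Unset Printing Implicit Defensive.
Import Order.TTheory GRing.Theory Num.Theory.
Local Open Scope ring_scope.

(* Write the roots of Q, sorted by modulus, as s = [z_1; ...; z_2n], and put
   e = 1 for r_PN^0, e = -1 for r_NP^0, so that e (-1)^i z_i > 0.  Consecutive
   roots form pairs (u, w) = (z_2j-1, z_2j) with 0 < b := e u = |u| and
   b <= c := -e w = |w|, the pairs being ordered by increasing moduli.
   The coefficient of x^(2n-k) in prod (x - z) is the coefficient of x^k in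
   the reciprocal product G = prod (1 - z x), and multiplying G by the factor
   (1 - u x)(1 - w x) of one more pair acts on the "signed coefficients"
   r_k = e^k psign(k) G_k (psign = the +-1 version of Sigma_+) by an explicit
   linear recurrence [pair_step b c].  Adding pairs in order of increasing
   modulus preserves an invariant [sign_invariant]: all r_k >= 0, the even
   ones are > 0, r_k <= c r_(k-1) for odd k (c the largest modulus so far),
   and the odd ones are > 0 as soon as some pair has b < c.  Hence either some
   pair is unbalanced and every coefficient has the sign prescribed by
   e^k psign(k), i.e. Sigma_+ or Sigma_-  (case (ii)), or all pairs are
   {a, -a} and Q = A prod (x^2 - a^2)  (case (i)).  Since d >= 2, the
   coefficient of x vanishes in case (i) and not in case (ii), which makes
   the two cases exclusive. *)

Section SignPattern.
Variable R : realFieldType.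

Definition psign (k : nat) : R := if Sigma_plus k then 1 else -1.

Lemma psignSS k : psign k.+2 = - psign k.
Proof.
rewrite /psign /Sigma_plus.
by case: ifP => hk2; case: ifP => hk //; rewrite ?opprK //; lia.
Qed.

Lemma psignS k : psign k.+1 = (if odd k then - psign k else psign k).
Proof.
rewrite /psign /Sigma_plus.
by case: ifP => ok; case: ifP => hk1; case: ifP => hk //; rewrite ?opprK //; lia.
Qed.

Lemma psign_minus k : (-1) ^+ k * psign k = if Sigma_minus k then 1 else -1.
Proof.
rewrite -signr_odd /psign /Sigma_plus /Sigma_minus.
case: ifP => hkp; case: ifP => hkm; case: (boolP (odd k)) => ok;
  rewrite /= ?mulr1 ?mulrN1 ?opprK ?mul1r ?mulN1r //; lia.
Qed.

Lemma sign_pos (i : nat) : (0 < (-1) ^+ i :> R) = ~~ odd i.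
Proof. by rewrite -signr_odd; case: (odd i); rewrite ?ltr01 // oppr_gt0 ltr10. Qed.

Lemma sign_neg (i : nat) : ((-1) ^+ i < 0 :> R) = odd i.
Proof. by rewrite -signr_odd; case: (odd i); rewrite ?ltr10 // oppr_lt0 ltr01. Qed.

End SignPattern.

Section ReciprocalProduct.
Variable R : comNzRingType.
Implicit Types (s : seq R) (G : {poly R}).

(* The reciprocal of prod_(z <- s) (X - z): its coefficients are those of
   the product read backwards, and they satisfy a first-order recurrence. *)
Definition rprod s : {poly R} := \prod_(z <- s) (1 - z *: 'X).

Lemma coef_mul_lin G z k :
  (G * (1 - z *: 'X))`_k = G`_k - z * (if k is j.+1 then G`_j else 0).
Proof. by rewrite mulrBr mulr1 -scalerAr coefB coefZ coefMX; case: k. Qed.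

Lemma rprod_cons z s : rprod (z :: s) = rprod s * (1 - z *: 'X).
Proof. by rewrite /rprod big_cons mulrC. Qed.

Lemma rprod_cat_pair s u w :
  rprod (s ++ [:: u; w]) = rprod s * (1 - u *: 'X) * (1 - w *: 'X).
Proof. by rewrite /rprod big_cat /= big_cons big_seq1 mulrA. Qed.

Lemma coef_rprod_gt s k : (size s < k)%N -> (rprod s)`_k = 0.
Proof.
elim: s k => [|z s IH] [|k] //= hk; first by rewrite /rprod big_nil coef1.
by rewrite rprod_cons coef_mul_lin !IH ?mulr0 ?subr0 //; lia.
Qed.

Lemma coef_prod_XsubC_rev s k : (k <= size s)%N ->
  (\prod_(z <- s) ('X - z%:P))`_(size s - k) = (rprod s)`_k.
Proof.
elim: s k => [|z s IH] k hk.
  by rewrite /rprod !big_nil; move: hk; rewrite leqn0 => /eqP ->.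
rewrite big_cons rprod_cons coef_mul_lin mulrBl coefB coefXM coefCM /=.
case: k hk => [|k] hk.
  by rewrite subn0 /= -IH // subn0 [_`_(size s).+1]nth_default ?size_prod_XsubC ?mulr0.
rewrite subSS; case: (ltngtP k (size s)) => hks; last 1 first.
- by rewrite hks subnn /= coef_rprod_gt // -IH // subnn.
- rewrite -!IH ?(ltnW hks) // subnS.
  by have -> : (size s - k == 0)%N = false by rewrite subn_eq0 leqNgt hks.
- by move: hk; rewrite /= ltnS leqNgt hks.
Qed.

End ReciprocalProduct.

Section EvenProducts.
Variable R : comNzRingType.

Lemma prod_XsubC_opp (x : R) : ('X - x%:P) * ('X - (- x)%:P) = 'X^2 - (x ^+ 2)%:P.
Proof. by rewrite polyCN polyC_exp; ring. Qed.

Lemma prod_XsubC_opp_pairs (a : seq R) :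
  \prod_(z <- a ++ map (fun x => - x) a) ('X - z%:P)
  = \prod_(x <- a) ('X^2 - (x ^+ 2)%:P).
Proof.
transitivity (\prod_(x <- a) (('X - x%:P) * ('X - (- x)%:P))).
  by rewrite big_split big_cat big_map.
by apply: eq_bigr => x _; rewrite prod_XsubC_opp.
Qed.

Lemma coef_prod_X2_odd (a : seq R) i :
  odd i -> (\prod_(x <- a) ('X^2 - (x ^+ 2)%:P))`_i = 0.
Proof.
elim: a i => [|x a IH] i oi; first by rewrite big_nil coef1; case: i oi.
rewrite big_cons mulrBl coefB coefXnM coefCM (IH i oi) mulr0 subr0.
by case: ltnP => // hi2; apply: IH; rewrite oddB // oi.
Qed.

End EvenProducts.

Section PairStep.
Variable R : realFieldType.
Implicit Types (r : nat -> R) (b c M : R).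

(* The effect on the signed coefficients r_k of multiplying by the factor of
   one more root pair with moduli b <= c (see [scoef_pair] below). *)
Definition pair_step b c r (k : nat) : R :=
  match k with
  | 0 => r 0
  | 1 => r 1 + (c - b) * r 0
  | j.+2 => r j.+2 + (c - b) * (if odd j then r j.+1 else - r j.+1) + b * c * r j
  end.

(* The invariant for the signed coefficients of a product of m pairs whose
   moduli are at most M; [strict] records that some pair is unbalanced. *)
Definition sign_invariant r (m : nat) M (strict : bool) : Prop :=
  [/\ forall k, 0 <= r k,
      forall k, (k <= 2 * m)%N -> ~~ odd k -> 0 < r k,
      forall k, odd k -> r k <= M * r k.-1 &
      strict -> (0 < m)%N /\ forall k, odd k -> (k < 2 * m)%N -> 0 < r k].

Lemma eq_sign_invariant r1 r2 m M strict : r1 =1 r2 ->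
  sign_invariant r1 m M strict -> sign_invariant r2 m M strict.
Proof.
move=> E [h1 h2 h3 h4]; split=> [k|k hk ok|k ok|/h4 [m0 h]]; rewrite -?E.
- exact: h1.
- exact: h2.
- exact: h3.
- by split=> // k ok hk; rewrite -E; apply: h.
Qed.

Variables (r : nat -> R) (m : nat) (M b c : R) (strict : bool).
Hypotheses (Hr : sign_invariant r m M strict) (HMb : M <= b) (Hb : 0 < b) (Hbc : b <= c).
Let r' := pair_step b c r.

(* Even indices: the bound r_(j+1) <= b r_j absorbs the negative middle term. *)
Lemma pair_step_even j : ~~ odd j -> r j.+2 + b * b * r j <= r' j.+2.
Proof.
case: Hr => r_ge0 _ r_odd _ oj; rewrite /r' /= (negbTE oj).
have h : r j.+1 <= b * r j.
  by apply: le_trans (r_odd j.+1 _) _; rewrite /= ?oj // ler_wpM2r.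
have := r_ge0 j; have : (c - b) * r j.+1 <= (c - b) * (b * r j).
  by rewrite ler_wpM2l // subr_ge0.
nra.
Qed.

Lemma pair_step_odd j : odd j -> r' j.+2 = r j.+2 + (c - b) * r j.+1 + b * c * r j.
Proof. by move=> oj; rewrite /r' /= oj. Qed.

Lemma pair_step_ge0 k : 0 <= r' k.
Proof.
case: Hr => r_ge0 _ _ _.
have cb : 0 <= c - b by rewrite subr_ge0.
case: k => [|[|j]]; first exact: r_ge0.
  by rewrite /r' /=; have := r_ge0 1%N; have := r_ge0 0%N; nra.
case: (boolP (odd j)) => oj; last first.
  by have := pair_step_even oj; have := r_ge0 j; have := r_ge0 j.+2; nra.
have c_ge0 : 0 <= c by apply: le_trans Hbc; exact: ltW.
by rewrite pair_step_odd // !addr_ge0 // !mulr_ge0 // ltW.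
Qed.

Lemma pair_step_even_gt0 k : (k <= 2 * m.+1)%N -> ~~ odd k -> 0 < r' k.
Proof.
case: Hr => r_ge0 r_even _ _.
case: k => [|[|j]] hk ok //; first exact: r_even.
rewrite /= negbK in ok; apply: lt_le_trans (pair_step_even ok).
have : 0 < b * b * r j by rewrite !mulr_gt0 // r_even //; lia.
by have := r_ge0 j.+2; lra.
Qed.

Lemma pair_step_odd_le k : odd k -> r' k <= c * r' k.-1.
Proof.
case: Hr => r_ge0 _ r_odd _.
case: k => [|[|[|i]]] ok //=.
  rewrite /r' /=; have := r_odd 1%N isT.
  have : M * r 0%N <= b * r 0%N by rewrite ler_wpM2r.
  lra.
rewrite /= negbK in ok; rewrite ok (negbTE ok).
have h3 : r i.+3 <= b * r i.+2.
  by apply: le_trans (r_odd i.+3 _) _; rewrite /= ?ok // ler_wpM2r.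
have h1 : r i.+1 <= b * r i.
  by apply: le_trans (r_odd i.+1 _) _; rewrite /= ?ok // ler_wpM2r.
have : c * c * r i.+1 <= c * c * (b * r i) by rewrite ler_wpM2l //; nra.
nra.
Qed.

(* Odd coefficients become positive once some pair is unbalanced: through
   the term (c - b) r_(k-1) for the new pair, through r_k or b c r_(k-2)
   for an earlier one. *)
Lemma pair_step_strict : strict || (b < c) ->
  (0 < m.+1)%N /\ forall k, odd k -> (k < 2 * m.+1)%N -> 0 < r' k.
Proof.
case: Hr => r_ge0 r_even _ r_strict /orP hs; split => // -[|[|j]] // ok hk.
- have r0_gt0 := r_even 0%N (leq0n _) isT.
  rewrite /r' /=; have := r_ge0 1%N; case: hs => [/r_strict [m0 h]|hbc].
    have := h 1%N isT (ltac:(lia)).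
    have : 0 <= (c - b) * r 0%N by rewrite mulr_ge0 ?subr_ge0 // ltW.
    lra.
  have : 0 < (c - b) * r 0%N by rewrite mulr_gt0 ?subr_gt0.
  lra.
- rewrite /= negbK in ok; rewrite pair_step_odd //.
  have c_gt0 : 0 < c by apply: lt_le_trans Hbc.
  have := r_ge0 j.+2; case: hs => [/r_strict [m0 h]|hbc].
    have : 0 < b * c * r j by rewrite !mulr_gt0 // h //; lia.
    have : 0 <= (c - b) * r j.+1 by rewrite mulr_ge0 ?subr_ge0.
    lra.
  have : 0 < (c - b) * r j.+1.
    by rewrite mulr_gt0 ?subr_gt0 // r_even //= ?ok //; lia.
  have : 0 <= b * c * r j by rewrite !mulr_ge0 // ltW.
  lra.
Qed.

Lemma sign_invariant_step : sign_invariant r' m.+1 c (strict || (b < c)).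
Proof.
split; [exact: pair_step_ge0 | exact: pair_step_even_gt0 | exact: pair_step_odd_le |].
exact: pair_step_strict.
Qed.

End PairStep.

Section RootsToSigns.
Variable R : realFieldType.
Implicit Types (s : seq R) (G : {poly R}) (e u w : R).

(* Signed coefficients, normalised to be nonnegative under the expected
   sign pattern e^k psign(k). *)
Definition scoef e G (k : nat) : R := e ^+ k * psign R k * G`_k.

Lemma scoef_pair e G u w k :
  scoef e (G * (1 - u *: 'X) * (1 - w *: 'X)) k
  = pair_step (e * u) (- (e * w)) (scoef e G) k.
Proof.
rewrite /scoef; case: k => [|[|j]] /=; rewrite !coef_mul_lin ?mulr0 ?subr0 //.
  by rewrite /psign /=; ring.
by rewrite psignSS psignS !exprS; case: (odd j); ring.
Qed.

Definition modulus_sorted s := sorted (fun x y : R => `|x| <= `|y|) s.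

Definition alternating e s := forall i, (i < size s)%N -> 0 < e * (-1) ^+ i * s`_i.

Lemma modulus_sorted_last_pair s u w : modulus_sorted (s ++ [:: u; w]) ->
  [/\ modulus_sorted s, `|last 0 s| <= `|u| & `|u| <= `|w|].
Proof.
case: s => [|x s]; first by rewrite /modulus_sorted /= normr0 normr_ge0 andbT.
by rewrite /modulus_sorted /= cat_path /= => /and4P [-> -> ->].
Qed.

Lemma alternating_last_pair e s u w : ~~ odd (size s) ->
  alternating e (s ++ [:: u; w]) -> [/\ alternating e s, 0 < e * u & 0 < - (e * w)].
Proof.
move=> es alt; have sz : size (s ++ [:: u; w]) = (size s).+2 by rewrite size_cat addn2.
split.
- by move=> i hi; have := alt i; rewrite nth_cat hi; apply; lia.
- have := alt (size s) (ltac:(lia)).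
  by rewrite nth_cat ltnn subnn -signr_odd (negbTE es) mulr1.
- have := alt (size s).+1 (ltac:(lia)).
  by rewrite nth_cat ltnNge leqnSn subSn // subnn -signr_odd /= (negbTE es) mulrN1 mulNr.
Qed.

Lemma sign_invariant_nil e M : 0 <= M ->
  sign_invariant (scoef e (rprod [::])) 0 M false.
Proof.
have r0 : scoef e (rprod [::]) 0 = 1 by rewrite /scoef /rprod big_nil coef1 /psign /= !mul1r.
have rS k : scoef e (rprod [::]) k.+1 = 0 by rewrite /scoef /rprod big_nil coef1 mulr0.
move=> M0; split=> [[|k]|[|k] //|[|[|k]] //=|//]; rewrite ?r0 ?rS ?ler01 ?ltr01 ?mulr1 //.
by rewrite mulr0.
Qed.

(* The main induction: the two roots of largest modulus form a pair (u, w)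
   with 0 < e u = |u| <= |w| = - e w, and their factor acts by [pair_step]. *)
Lemma sign_invariant_roots e (m : nat) s : `|e| = 1 ->
  size s = (2 * m)%N -> modulus_sorted s -> alternating e s ->
  exists strict : bool, sign_invariant (scoef e (rprod s)) m `|last 0 s| strict /\
    (~~ strict -> exists a : seq R, [/\ size a = m, all (fun x => x != 0) a &
       \prod_(z <- s) ('X - z%:P) = \prod_(x <- a) ('X^2 - (x ^+ 2)%:P)]).
Proof.
move=> e1; elim: m s => [|m IH] s.
  move=> /size0nil -> _ _; exists false; split; first exact/sign_invariant_nil/normr_ge0.
  by move=> _; exists [::]; rewrite !big_nil.
case/lastP: s => [|s' w]; first by [].
case/lastP: s' => [|s u]; first by rewrite size_rcons /= => sz; exfalso; lia.
rewrite -!cats1 -catA /= => sz srt alt.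
have {}sz : size s = (2 * m)%N by move: sz; rewrite size_cat /=; lia.
have [srt_s last_u u_w] := modulus_sorted_last_pair srt.
have [alt_s eu ew] : [/\ alternating e s, 0 < e * u & 0 < - (e * w)].
  by apply: alternating_last_pair alt; rewrite sz mul2n odd_double.
have nu : `|u| = e * u by rewrite -(mul1r `|u|) -e1 -normrM gtr0_norm.
have nw : `|w| = - (e * w) by rewrite -(mul1r `|w|) -e1 -normrM -normrN gtr0_norm.
have [strict [inv_s bal_s]] := IH s sz srt_s alt_s.
exists (strict || (e * u < - (e * w))); split.
  rewrite last_cat /= nw rprod_cat_pair.
  apply: (@eq_sign_invariant _ (pair_step (e * u) (- (e * w)) (scoef e (rprod s)))).
    by move=> k; rewrite scoef_pair.
  by apply: sign_invariant_step inv_s _ eu _; rewrite -nu -?nw.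
rewrite negb_or -leNgt => /andP [/bal_s [a [sz_a nz_a Ea]] wu].
have w_u : w = - u.
  have : e * (u + w) = 0 by rewrite mulrDr; apply/eqP; rewrite addr_eq0 eq_le wu -nu -nw u_w.
  have e0 : e != 0 by rewrite -normr_eq0 e1 oner_neq0.
  by move/eqP; rewrite mulf_eq0 (negbTE e0) addr_eq0 => /eqP ->; rewrite opprK.
exists (rcons a u); split; first by rewrite size_rcons sz_a.
  by rewrite all_rcons nz_a andbT; apply: contraTneq eu => ->; rewrite mulr0 ltxx.
by rewrite big_cat /= big_cons big_seq1 Ea w_u prod_XsubC_opp big_rcons.
Qed.

End RootsToSigns.

Section Dichotomy.
Variable R : realFieldType.
Implicit Types (Q : {poly R}) (e : R).

Lemma moae_alternating e (w : seq bool) Q : `|e| = 1 ->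
  (forall i, (i < size w)%N -> nth true w i = (0 < e * (-1) ^+ i)) ->
  defines_moae Q w ->
  exists s, [/\ size s = size w, Q = lead_coef Q *: \prod_(z <- s) ('X - z%:P),
                modulus_sorted s & alternating e s].
Proof.
move=> e1 hw [s [sz EQ srt sg]]; exists s; split=> // i hi.
have [+ +] := sg i (ltac:(by rewrite -sz)); rewrite hw -?sz //.
have t1 : `|e * (-1) ^+ i| = 1 by rewrite normrM e1 normr_sign mul1r.
have [t_gt0 pos _|t_le0 _ neg] := ltP 0 (e * (-1) ^+ i); first by rewrite mulr_gt0 ?pos.
have t_lt0 : e * (-1) ^+ i < 0 by rewrite lt_neqAle t_le0 andbT -normr_eq0 t1 oner_neq0.
by have := neg isT; nra.
Qed.

Definition even_case Q (n : nat) :=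
  (exists a : seq R, [/\ size a = n, all (fun x => x != 0) a &
                         Q = lead_coef Q *: \prod_(x <- a) ('X^2 - (x ^+ 2)%:P)]) /\
  forall k, (k <= 2 * n)%N -> ~~ odd k -> 0 < psign R k * Q`_(2 * n - k).

Definition strict_case e Q (n : nat) :=
  forall k, (k <= 2 * n)%N -> 0 < e ^+ k * psign R k * Q`_(2 * n - k).

Lemma moae_dichotomy e (w : seq bool) Q n : `|e| = 1 -> 0 < lead_coef Q ->
  size w = (2 * n)%N ->
  (forall i, (i < size w)%N -> nth true w i = (0 < e * (-1) ^+ i)) ->
  defines_moae Q w -> even_case Q n \/ strict_case e Q n.
Proof.
move=> e1 lc szw hw /(moae_alternating e1 hw) [s [sz EQ srt alt]].
rewrite szw in sz.
have [strict [[_ r_even _ r_strict] bal]] := sign_invariant_roots e1 sz srt alt.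
have coefQ k : (k <= 2 * n)%N ->
    e ^+ k * psign R k * Q`_(2 * n - k) = lead_coef Q * scoef e (rprod s) k.
  by move=> hk; rewrite {1}EQ coefZ -sz coef_prod_XsubC_rev ?sz // /scoef; ring.
case: strict r_strict bal => [/(_ isT) [_ r_odd] _|_ /(_ isT) [a [sz_a nz_a Ea]]].
  right=> k hk; rewrite coefQ // pmulr_rgt0 //.
  case: (boolP (odd k)) => ok; last exact: r_even.
  apply: r_odd => //; rewrite ltn_neqAle hk andbT.
  by apply: contraTneq ok => ->; rewrite mul2n odd_double.
left; split; first by exists a; rewrite {1}EQ Ea.
move=> k hk ok; have e2 : e ^+ 2 = 1 by apply/eqP; rewrite sqr_norm_eq1 e1.
have ek : e ^+ k = 1.
  by rewrite -(odd_double_half k) (negbTE ok) add0n -mul2n exprM e2 expr1n.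
by have := coefQ k hk; rewrite ek mul1r => ->; rewrite pmulr_rgt0 // r_even.
Qed.

Lemma moae_PN_dichotomy Q n : 0 < lead_coef Q ->
  defines_moae Q (r_PN0 (2 * n)) -> even_case Q n \/ strict_case 1 Q n.
Proof.
move=> lc; apply: moae_dichotomy => //; [exact: normr1 | exact: size_mkseq | move=> i hi].
by rewrite size_mkseq in hi; rewrite nth_mkseq // mul1r sign_pos.
Qed.

Lemma moae_NP_dichotomy Q n : 0 < lead_coef Q ->
  defines_moae Q (r_NP0 (2 * n)) -> even_case Q n \/ strict_case (-1) Q n.
Proof.
move=> lc; apply: moae_dichotomy => //; [exact: normrN1 | exact: size_mkseq | move=> i hi].
by rewrite size_mkseq in hi; rewrite nth_mkseq // mulN1r oppr_gt0 sign_neg.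
Qed.

Lemma even_case_even Q n : even_case Q n -> even_poly_prop Q.
Proof. by move=> [[a [_ _ ->]] _] i oi; rewrite coefZ coef_prod_X2_odd ?mulr0. Qed.

Lemma even_case_signs Q n : even_case Q n -> forall k, (k <= 2 * n)%N ->
  [/\ odd k -> Q`_(2 * n - k) = 0,
      (k %% 4 == 0)%N -> 0 < Q`_(2 * n - k) &
      (k %% 4 == 2)%N -> Q`_(2 * n - k) < 0].
Proof.
move=> hQ k hk; have [_ Qsign] := hQ; split=> [ok|k0|k2].
- by apply: (even_case_even hQ); rewrite oddB // mul2n odd_double ok.
- by have := Qsign k hk (ltac:(lia)); rewrite /psign /Sigma_plus k0 mul1r.
- by have := Qsign k hk (ltac:(lia)); rewrite /psign /Sigma_plus (eqP k2) /= mulN1r oppr_gt0.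
Qed.

Lemma pairable_even Q : roots_pairable Q -> even_poly_prop Q.
Proof.
move=> [s [a [EQ perm_s]]] i oi.
by rewrite EQ coefZ (perm_big _ perm_s) prod_XsubC_opp_pairs coef_prod_X2_odd ?mulr0.
Qed.

(* In case (ii) no coefficient vanishes, so Q is not even, hence its roots
   cannot be paired. *)
Lemma strict_case_neq0 e Q n i : strict_case e Q n -> (i <= 2 * n)%N -> Q`_i != 0.
Proof.
move=> hQ hi; have := hQ (2 * n - i)%N (leq_subr _ _); rewrite subKn //.
by apply: contraTneq => ->; rewrite mulr0 ltxx.
Qed.

Lemma strict_case_unpairable e Q n : (0 < n)%N ->
  strict_case e Q n -> ~ roots_pairable Q.
Proof.
move=> n0 hQ /pairable_even Qeven.
by have := strict_case_neq0 (i := 1) hQ (ltac:(lia)); rewrite Qeven ?eqxx.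
Qed.

Lemma strict_sign_pattern e Q n (sigma : nat -> bool) :
  (forall k, e ^+ k * psign R k = if sigma k then 1 else -1) ->
  strict_case e Q n -> defines_sign_pattern Q (2 * n) sigma.
Proof.
move=> Esigma hQ k hk; have := hQ k hk; rewrite Esigma.
by case: (sigma k) => h; split=> // _; move: h; rewrite ?mul1r ?mulN1r ?oppr_gt0.
Qed.

End Dichotomy.

Theorem theorem1p10 (R : realFieldType) (d : nat) (Q : {poly R}) :
  (2 <= d)%N -> ~~ odd d ->
  hyperbolic Q -> size Q = d.+1 -> 0 < lead_coef Q -> Q`_0 != 0 ->
  defines_moae Q (r_PN0 d) \/ defines_moae Q (r_NP0 d) ->
  let caseI := even_poly_prop Q /\
      exists (A : R) (a : seq R),
        [/\ 0 < A, size a = d./2, all (fun x => x != 0) a &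
            Q = A *: \prod_(x <- a) ('X^2 - (x ^+ 2)%:P)] in
  let caseII := (forall i, (i <= d)%N -> Q`_i != 0) /\ ~ roots_pairable Q in
  [/\ caseI <-> ~ caseII,
      caseI -> forall k, (k <= d)%N ->
        [/\ odd k -> Q`_(d - k) = 0,
            (k %% 4 == 0)%N -> 0 < Q`_(d - k) &
            (k %% 4 == 2)%N -> Q`_(d - k) < 0] &
      caseII ->
        (defines_moae Q (r_PN0 d) -> defines_sign_pattern Q d Sigma_plus) /\
        (defines_moae Q (r_NP0 d) -> defines_sign_pattern Q d Sigma_minus)].
Proof.
move=> d2 d_even _ _ lc _ moae.
have [n Ed] : exists n, d = (2 * n)%N.
  by exists d./2; rewrite mul2n -[LHS]odd_double_half (negbTE d_even).
subst d => caseI caseII.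
have excl : caseI -> ~ caseII.
  by move=> [Qev _] [/(_ 1%N) Q1 _]; move: Q1; rewrite Qev ?eqxx //; lia.
have I_even : even_case Q n -> caseI.
  move=> Qeven; split; first exact: even_case_even Qeven.
  by case: Qeven => [[a [? ? ?]] _]; exists (lead_coef Q), a; rewrite mul2n doubleK.
have [Qeven|[e Qstrict]] : even_case Q n \/ exists e, strict_case e Q n.
  by case: moae => [/(moae_PN_dichotomy lc)|/(moae_NP_dichotomy lc)] [|hQ];
    [left | right; exists 1 | left | right; exists (-1)].
- have hI := I_even Qeven.
  by split=> [|_|/(excl hI) //]; [split=> // _ | exact: even_case_signs].
- have hII : caseII.
    split=> [i|]; first exact: strict_case_neq0 Qstrict.
    by apply: strict_case_unpairable Qstrict; lia.
  split=> [|/excl /(_ hII) //|_]; first by split=> [/excl /(_ hII) //|/(_ hII)].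
  split=> [/(moae_PN_dichotomy lc)|/(moae_NP_dichotomy lc)] [/I_even/excl/(_ hII) //|hQ].
  + by apply: strict_sign_pattern _ hQ => k; rewrite expr1n mul1r.
  + exact: strict_sign_pattern (psign_minus R) hQ.
Qed.
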